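(* Let $m\ge 2$ be fixed and assume (A1)–(A4). Let $X_{\mathbf 1}$ be the number of coupons collected by all $m$ collectors. Then $$\operatorname{Var}(X_{\mathbf 1})\asymp \frac{(n-a_1)(n-a_2)}{n}\prod_{i=1}^m\frac{a_i}{n}=\Big(1-\frac{a_1}{n}\Big)\Big(1-\frac{a_2}{n}\Big)\mathbb{E}(X_{\mathbf 1}).$$
   Context: Coupon collector model: there are $n$ distinct coupons and $m$ collectors acting independently; collector $i$ collects a uniformly random subset of exactly $a_i$ distinct coupons, independently of the others. We consider a sequence of such models indexed by $n$, with $m$ fixed and $a_i=a_i(n)$, under the asymptotic assumptions: (A1) $n\to\infty$; (A2) $a_i\to\infty$ and $n-a_i\to\infty$ for each $i=1,\dots,m$; (A3) $1\le a_1\le a_2\le\cdots\le a_m\le n-1$; (A4) $a_i/n\to\alpha_i\in[0,1]$ for each $i$. For positive sequences, $x_n\asymp y_n$ means that both $\limsup x_n/y_n$ and $\liminf x_n/y_n$ are finite and strictly positive. *)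

From mathcomp Require Import all_boot.
From Stdlib Require Import Reals.

Set Implicit Arguments.
Unset Strict Implicit.
Unset Printing Implicit Defensive.

(* A configuration of the model with n coupons and m collectors, where
   collector i collects exactly [a i] coupons: a family of m subsets of
   'I_n with #|f i| = a i.  The joint law of the collectors (independent,
   each uniform on the a_i-subsets) is the uniform law on such configurations. *)
Definition config_ok (n m : nat) (a : nat -> nat) (f : {ffun 'I_m -> {set 'I_n}}) : bool :=
  [forall i : 'I_m, #|f i| == a i].

Definition X_all (n m : nat) (f : {ffun 'I_m -> {set 'I_n}}) : nat :=
  #|\bigcap_(i : 'I_m) f i|.

Definition n_configs (n m : nat) (a : nat -> nat) : nat :=
  \sum_(f : {ffun 'I_m -> {set 'I_n}} | config_ok a f) 1.

Definition sum_X (n m : nat) (a : nat -> nat) : nat :=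
  \sum_(f : {ffun 'I_m -> {set 'I_n}} | config_ok a f) X_all f.

Definition sum_X2 (n m : nat) (a : nat -> nat) : nat :=
  \sum_(f : {ffun 'I_m -> {set 'I_n}} | config_ok a f) (X_all f) ^ 2.

Definition mean_X (n m : nat) (a : nat -> nat) : R :=
  (INR (sum_X n m a) / INR (n_configs n m a))%R.

Definition var_X (n m : nat) (a : nat -> nat) : R :=
  (INR (sum_X2 n m a) / INR (n_configs n m a) - (mean_X n m a) ^ 2)%R.

Definition tends_to_infty (s : nat -> nat) : Prop :=
  forall M : nat, exists K : nat, forall k : nat, (K <= k)%N -> (M <= s k)%N.

(* x_k ≍ y_k : the ratio x_k / y_k has finite, strictly positive limsup and
   liminf, i.e. it is eventually bounded between two positive constants. *)
Definition asymp (x y : nat -> R) : Prop :=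
  exists c C : R, (0 < c)%R /\ (0 < C)%R /\
    exists K : nat, forall k : nat, (K <= k)%N ->
      (c <= x k / y k)%R /\ (x k / y k <= C)%R.

(* Fix a set S of s coupons.  Counting the a-subsets of the n coupons that contain S shows
   that collector i contains S with probability a_i^_s / n^_s (falling factorials); summing
   over single coupons and ordered pairs of coupons gives E X = n P and
   E X^2 = n P + n (n - 1) P Q, where P = prod_i a_i/n and Q = prod_i (a_i - 1)/(n - 1).
   Hence Var X = n P D_m with D_k = 1 - n P_k + (n - 1) Q_k, P_k and Q_k being the products
   over the first k collectors.  Passing from k to k + 1 adds n (1 - a_{k+1}/n) (P_k - Q_k),
   which is nonnegative and, as P_k - Q_k <= k (1 - a_1/n)/(n - 1) and a_{k+1} >= a_2 when
   k >= 1, at most 2 k (1 - a_1/n)(1 - a_2/n).  Since D_2 = n/(n - 1) (1 - a_1/n)(1 - a_2/n),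
   the ratio D_m / ((1 - a_1/n)(1 - a_2/n)) lies in [1, m^2] for every n. *)

From HB Require Import structures.
From mathcomp Require Import all_boot.
From Stdlib Require Import Reals Lra Psatz.
Set Implicit Arguments. Unset Strict Implicit. Unset Printing Implicit Defensive.

Lemma card_ffun_family (I J : finType) (Q : I -> pred J) :
  \sum_(f : {ffun I -> J} | [forall i, Q i (f i)]) 1 = \prod_i #|Q i|.
Proof.
rewrite -(eq_bigr _ (fun i _ => sum1_card (Q i))).
rewrite (bigA_distr_big_dep Q (fun _ _ => 1)) /=.
by apply: eq_big => [f|f _]; [apply/forallP/familyP | rewrite prod_nat_const exp1n].
Qed.

Lemma bin_sub_ffact N k s : s <= k -> 'C(N - s, k - s) * N ^_ s = 'C(N, k) * k ^_ s.
Proof.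
elim: s N k => [|s IHs] N [|k] //; rewrite ?subn0 ?muln1 // ltnS => le_sk.
case: N => [|N]; first by rewrite ffact0n !muln0 bin0n.
rewrite !ffactSS !subSS mulnCA IHs //.
by rewrite mulnA (mul_bin_diag N.+1) mulnCA mulnA.
Qed.

Definition draws_over (T : finType) (S : {set T}) k :=
  [set A : {set T} | S \subset A & #|A| == k].

Lemma card_draws_over_sub (T : finType) (S : {set T}) k : #|S| <= k ->
  #|draws_over S k| = 'C(#|T| - #|S|, k - #|S|).
Proof.
move=> le_Sk; have -> : #|T| - #|S| = #|~: S| by rewrite [#|~: S|]cardsCs setCK.
rewrite -cards_draws.
have setDUK (A : {set T}) : S \subset A -> (A :\: S) :|: S = A.
  move=> sSA; apply/setP => x; rewrite !inE.
  by case: (boolP (x \in S)) => [/(subsetP sSA) -> | _]; rewrite ?orbT ?orbF.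
have injD : {in draws_over S k &, injective (fun A => A :\: S)}.
  move=> A1 A2; rewrite !inE => /andP [sSA1 _] /andP [sSA2 _] eqD.
  by rewrite -(setDUK _ sSA1) -(setDUK _ sSA2) eqD.
rewrite -(card_in_imset injD); apply: eq_card => B; rewrite inE.
apply/imsetP/andP => [[A] | [sBS /eqP cardB]].
  rewrite inE => /andP [sSA /eqP <-] ->; split; first by rewrite setDE subsetIr.
  by rewrite cardsD (setIidPr sSA).
have disBS : [disjoint B & S] by rewrite disjoints_subset.
exists (B :|: S); last by rewrite setDUl setDv setU0; apply/esym/setDidPl.
rewrite inE subsetUr cardsU (disjoint_setI0 disBS) cards0 subn0 cardB subnK //=.
Qed.

Lemma card_draws_over (T : finType) (S : {set T}) k :
  #|draws_over S k| * #|T| ^_ #|S| = 'C(#|T|, k) * k ^_ #|S|.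
Proof.
have [lt_kS | le_Sk] := ltnP k #|S|; last by rewrite card_draws_over_sub ?bin_sub_ffact.
rewrite [k ^_ _]ffact_small // muln0 eq_card0 // => A; rewrite inE.
apply/negbTE/andP => -[/subset_leq_card le_SA /eqP cardA].
by move: lt_kS; rewrite -cardA ltnNge le_SA.
Qed.

Lemma count_configs_over n m (a : nat -> nat) (S : {set 'I_n}) :
  \sum_(f : {ffun 'I_m -> {set 'I_n}} | config_ok a f) (S \subset \bigcap_i f i)
  = \prod_(i < m) #|draws_over S (a i)|.
Proof.
rewrite -big_mkcondr /= -(card_ffun_family (fun i : 'I_m => [pred A | A \in draws_over S (a i)])).
apply: eq_bigl => f; apply/andP/forallP => [[/forallP cardf /bigcapsP sSf] i | drawsf].
  by rewrite /= inE sSf ?cardf.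
split; first by apply/forallP => i; have := drawsf i; rewrite /= inE => /andP [].
by apply/bigcapsP => i _; have := drawsf i; rewrite /= inE => /andP [].
Qed.

Lemma card_sum_sub1 (T : finType) (B : {set T}) : #|B| = \sum_j ([set j] \subset B).
Proof. by rewrite -sum1_card big_mkcond; apply: eq_bigr => j _; rewrite sub1set. Qed.

Lemma card_sqr_sum_sub2 (T : finType) (B : {set T}) :
  #|B| ^ 2 = \sum_j \sum_l ([set j; l] \subset B).
Proof.
have -> : #|B| ^ 2 = #|B| * #|B| by rewrite /= Nat.mul_1_r.
rewrite card_sum_sub1 big_distrlr /=.
by apply: eq_bigr => j _; apply: eq_bigr => l _; rewrite subUset !sub1set mulnb.
Qed.

Lemma sum_XE n m (a : nat -> nat) :
  sum_X n m a = \sum_(j : 'I_n) \prod_(i < m) #|draws_over [set j] (a i)|.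
Proof.
rewrite /sum_X /X_all; under eq_bigr do rewrite card_sum_sub1.
by rewrite exchange_big; apply: eq_bigr => j _; apply: count_configs_over.
Qed.

Lemma sum_X2E n m (a : nat -> nat) :
  sum_X2 n m a = \sum_(j : 'I_n) \sum_(l : 'I_n) \prod_(i < m) #|draws_over [set j; l] (a i)|.
Proof.
rewrite /sum_X2 /X_all; under eq_bigr do rewrite card_sqr_sum_sub2.
rewrite exchange_big; apply: eq_bigr => j _; rewrite exchange_big.
by apply: eq_bigr => l _; apply: count_configs_over.
Qed.

Lemma n_configsE n m (a : nat -> nat) :
  n_configs n m a = \prod_(i < m) 'C(n, a i).
Proof.
rewrite /n_configs (eq_bigr (fun f : {ffun 'I_m -> {set 'I_n}} =>
  nat_of_bool (set0 \subset \bigcap_i f i))) => [|f _]; last by rewrite sub0set.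
rewrite count_configs_over.
apply: eq_bigr => i _; have := card_draws_over (set0 : {set 'I_n}) (a i).
by rewrite cards0 !ffactn0 !muln1 card_ord.
Qed.

HB.instance Definition _ := Monoid.isComLaw.Build R 1%R Rmult
  (fun x y z => esym (Rmult_assoc x y z)) Rmult_comm Rmult_1_l.

Section RealCounts.
Local Open Scope R_scope.

Lemma INR_pred k : (0 < k)%nat -> INR k.-1 = INR k - 1.
Proof. by move=> k_gt0; rewrite -{2}(prednK k_gt0) S_INR; ring. Qed.

Lemma INR_prod (I : finType) (F : I -> nat) :
  INR (\prod_i F i) = \big[Rmult/1]_i INR (F i).
Proof. exact: (big_morph INR mult_INR (erefl (INR 1))). Qed.

Lemma INR_sum_const (I : finType) (P : pred I) (F : I -> nat) (c : R) :
  (forall i, P i -> INR (F i) = c) -> INR (\sum_(i | P i) F i) = INR #|P| * c.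
Proof.
move=> Fc; rewrite (big_morph INR plus_INR (erefl (INR 0))) (eq_bigr _ Fc) big_const.
elim: #|P| => [|k IHk]; first by rewrite /=; ring.
by rewrite S_INR /= IHk; ring.
Qed.

Lemma INR_card_draws_over1 n k (j : 'I_n) :
  INR #|draws_over [set j] k| = INR 'C(n, k) * (INR k / INR n).
Proof.
have n_gt0 : 0 < INR n by apply: lt_0_INR; apply/ltP; exact: leq_ltn_trans (ltn_ord j).
have := card_draws_over [set j] k; rewrite cards1 card_ord !ffactn1.
by move/(f_equal INR); rewrite !mult_INR => countE; field_simplify_eq; lra.
Qed.

Lemma INR_card_draws_over2 n k (j l : 'I_n) : j != l -> (0 < k)%nat ->
  INR #|draws_over [set j; l] k|
  = INR 'C(n, k) * (INR k / INR n * ((INR k - 1) / (INR n - 1))).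
Proof.
move=> neq_jl k_gt0.
have n_ge2 : (2 <= n)%nat.
  by have := subset_leq_card (subsetT [set j; l]); rewrite cards2 neq_jl cardsT card_ord.
have n_gt1 : 1 < INR n by apply: (lt_INR 1); apply/ltP.
have := card_draws_over [set j; l] k; rewrite cards2 neq_jl card_ord ![_ ^_ 2]ffactnS !ffactn1.
move/(f_equal INR); rewrite !mult_INR !INR_pred ?(leq_trans _ n_ge2) // => countE.
field_simplify_eq; lra.
Qed.

End RealCounts.

Section VarianceFactor.
Local Open Scope R_scope.

Lemma prodR_sub_le (k : nat) (p q : nat -> R) (d : R) :
  (forall i : nat, (i < k)%nat -> 0 <= q i <= p i /\ p i <= 1 /\ p i - q i <= d) ->
  (0 <= \big[Rmult/1]_(i < k) q i <= \big[Rmult/1]_(i < k) p i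
   /\ \big[Rmult/1]_(i < k) p i <= 1)
  /\ \big[Rmult/1]_(i < k) p i - \big[Rmult/1]_(i < k) q i <= INR k * d.
Proof.
elim: k => [|k IHk] pq_bounds; first by rewrite !big_ord0 /=; lra.
have [[[Q_ge0 le_QP] P_le1] le_PQ] := IHk (fun i lt_ik => pq_bounds i (ltnW lt_ik)).
have [[q_ge0 le_qp] [p_le1 le_pq_d]] := pq_bounds k (ltnSn k).
rewrite S_INR !big_ord_recr /=.
set P := \big[Rmult/1]_(i < k) p i in le_QP P_le1 le_PQ *.
set Q := \big[Rmult/1]_(i < k) q i in Q_ge0 le_QP le_PQ *.
have -> : P * p k - Q * q k = p k * (P - Q) + Q * (p k - q k) by ring.
split; [split|]; nra.
Qed.

Variables (N : R) (x : nat -> R).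

Definition share i := x i / N.
Definition share2 i := (x i - 1) / (N - 1).
Definition var_factor k :=
  1 - N * \big[Rmult/1]_(i < k) share i + (N - 1) * \big[Rmult/1]_(i < k) share2 i.

Hypothesis N_ge2 : 2 <= N.

Lemma share_sub_share2 i : share i - share2 i = (1 - share i) / (N - 1).
Proof. rewrite /share /share2; field; lra. Qed.

Lemma var_factorS k : var_factor k.+1 = var_factor k
  + N * (1 - share k) * (\big[Rmult/1]_(i < k) share i - \big[Rmult/1]_(i < k) share2 i).
Proof.
rewrite /var_factor !big_ord_recr /=.
have := share_sub_share2 k; rewrite /Rdiv => share2E.
have {}share2E : share2 k = share k - (1 - share k) * / (N - 1) by lra.
rewrite share2E; field; lra.
Qed.

Variable m : nat.
Hypothesis x_bounds : forall i, (i < m)%nat -> 1 <= x i <= N - 1.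
Hypothesis x_sorted : forall i j, (i <= j)%nat -> (j < m)%nat -> x i <= x j.

Lemma share_bounds i : (i < m)%nat -> 0 < share i < 1.
Proof.
move=> /x_bounds x_i; rewrite /share /Rdiv.
have invN_gt0 : 0 < / N by apply: Rinv_0_lt_compat; lra.
have : N * / N = 1 by field; lra.
split; nra.
Qed.

Lemma share_le i j : (i <= j)%nat -> (j < m)%nat -> share i <= share j.
Proof.
move=> le_ij lt_jm; rewrite /share /Rdiv; apply: Rmult_le_compat_r; last exact: x_sorted.
by apply: Rlt_le; apply: Rinv_0_lt_compat; lra.
Qed.

Lemma share2_bounds i : (i < m)%nat ->
  0 <= share2 i <= share i /\ share i <= 1 /\ share i - share2 i <= (1 - share 0) / (N - 1).
Proof.
move=> lt_im; have [share_gt0 share_lt1] := share_bounds lt_im.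
have share0_le := share_le (leq0n i) lt_im.
have invN1_gt0 : 0 < / (N - 1) by apply: Rinv_0_lt_compat; lra.
have := share_sub_share2 i; rewrite /Rdiv => share_subE.
have share2_ge0 : 0 <= share2 i.
  by rewrite /share2 /Rdiv; have := x_bounds lt_im; nra.
split; [|split]; [split|..]; nra.
Qed.

Lemma prod_share_bounds k : (k <= m)%nat ->
  (0 <= \big[Rmult/1]_(i < k) share2 i <= \big[Rmult/1]_(i < k) share i
   /\ \big[Rmult/1]_(i < k) share i <= 1)
  /\ \big[Rmult/1]_(i < k) share i - \big[Rmult/1]_(i < k) share2 i
     <= INR k * ((1 - share 0) / (N - 1)).
Proof.
by move=> le_km; apply: prodR_sub_le => i lt_ik; apply: share2_bounds (leq_trans lt_ik le_km).
Qed.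

Lemma var_factor2 : var_factor 2 = N / (N - 1) * (1 - share 0) * (1 - share 1).
Proof.
rewrite !var_factorS /var_factor !big_ord0 !big_ord1 share_sub_share2 /Rdiv /=.
field; lra.
Qed.

Lemma var_factor_step_bounds k : (k < m)%nat ->
  0 <= N * (1 - share k)
       * (\big[Rmult/1]_(i < k) share i - \big[Rmult/1]_(i < k) share2 i)
    <= 2 * INR k * ((1 - share 0) * (1 - share 1)).
Proof.
move=> lt_km; have [[[_ le_QP] _] le_diff] := prod_share_bounds (ltnW lt_km).
move: le_QP le_diff; set D := _ - _; move=> le_QP le_diff.
have [_ share_k_lt1] := share_bounds lt_km.
have invN1_gt0 : 0 < / (N - 1) by apply: Rinv_0_lt_compat; lra.
have N_div : N * / (N - 1) <= 2.
  have : (N - 1) * / (N - 1) = 1 by field; lra.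
  nra.
have D_ge0 : 0 <= D by rewrite /D; lra.
split; first by apply: Rmult_le_pos; [apply: Rmult_le_pos|]; lra.
have [k0 | k_gt0] := posnP k.
  move: le_diff; rewrite k0 /= Rmult_0_l => D_le0.
  have -> : D = 0 by lra.
  lra.
have share1_le := share_le k_gt0 lt_km.
have [_ share0_lt1] := share_bounds (leq_ltn_trans (leq0n k) lt_km).
have k_ge0 := pos_INR k.
apply: (Rle_trans _ (N * (1 - share k) * (INR k * ((1 - share 0) / (N - 1))))).
  by apply: Rmult_le_compat_l => //; apply: Rmult_le_pos; lra.
rewrite /Rdiv.
have -> : N * (1 - share k) * (INR k * ((1 - share 0) * / (N - 1)))
  = (N * / (N - 1)) * ((1 - share k) * (INR k * (1 - share 0))) by ring.
have -> : 2 * INR k * ((1 - share 0) * (1 - share 1))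
  = 2 * ((1 - share 1) * (INR k * (1 - share 0))) by ring.
apply: Rmult_le_compat; nra.
Qed.

Lemma var_factor_ge k : (2 <= k)%nat -> (k <= m)%nat ->
  (1 - share 0) * (1 - share 1) <= var_factor k.
Proof.
elim: k => [|k IHk] // le2k lt_km.
move: le2k; rewrite leq_eqVlt => /orP [/eqP [k1] | le2k].
  subst k; rewrite var_factor2 /Rdiv.
  have [_ share0_lt1] := share_bounds (ltnW lt_km).
  have [_ share1_lt1] := share_bounds lt_km.
  have N_div_ge1 : 1 <= N * / (N - 1).
    have : (N - 1) * / (N - 1) = 1 by field; lra.
    have : 0 < / (N - 1) by apply: Rinv_0_lt_compat; lra.
    nra.
  have : 0 < (1 - share 0) * (1 - share 1) by apply: Rmult_lt_0_compat; lra.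
  nra.
have [step_ge0 _] := var_factor_step_bounds lt_km.
by rewrite var_factorS; have := IHk le2k (ltnW lt_km); lra.
Qed.

Lemma var_factor_le k : (1 < m)%nat -> (k <= m)%nat ->
  var_factor k <= INR k ^ 2 * ((1 - share 0) * (1 - share 1)).
Proof.
move=> lt1m; elim: k => [_ | k IHk lt_km].
  by rewrite /var_factor !big_ord0 /=; lra.
have [_ step_le] := var_factor_step_bounds lt_km.
have [_ share0_lt1] := share_bounds (ltnW lt1m).
have [_ share1_lt1] := share_bounds lt1m.
have : 0 < (1 - share 0) * (1 - share 1) by apply: Rmult_lt_0_compat; lra.
have := IHk (ltnW lt_km); rewrite var_factorS S_INR.
move: step_le; set step := N * _ * _; set T := (1 - share 0) * (1 - share 1).
have -> : (INR k + 1) ^ 2 * T = INR k ^ 2 * T + 2 * INR k * T + T by ring.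
lra.
Qed.

End VarianceFactor.

Section Moments.
Local Open Scope R_scope.

Variables (n m : nat) (a : nat -> nat).
Hypothesis a_bounds : forall i, (i < m)%nat -> (0 < a i < n)%nat.

Let x i := INR (a i).
Let C := \big[Rmult/1]_(i < m) INR 'C(n, a i).
Let P := \big[Rmult/1]_(i < m) share (INR n) x i.
Let Q := \big[Rmult/1]_(i < m) share2 (INR n) x i.

Lemma INR_n_configs : INR (n_configs n m a) = C.
Proof. by rewrite n_configsE INR_prod. Qed.

Lemma C_gt0 : 0 < C.
Proof.
apply: (big_ind (fun r => 0 < r)); [lra | exact: Rmult_lt_0_compat | move=> i _].
have /andP [_ lt_an] := a_bounds (ltn_ord i).
by apply: lt_0_INR; apply/ltP; rewrite bin_gt0; apply: ltnW.
Qed.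

Lemma INR_prod_draws_over1 (j : 'I_n) :
  INR (\prod_(i < m) #|draws_over [set j] (a i)|) = C * P.
Proof.
by rewrite INR_prod -big_split; apply: eq_bigr => i _; rewrite INR_card_draws_over1.
Qed.

Lemma INR_prod_draws_over2 (j l : 'I_n) : j != l ->
  INR (\prod_(i < m) #|draws_over [set j; l] (a i)|) = C * (P * Q).
Proof.
move=> neq_jl; rewrite INR_prod /P /Q -!big_split; apply: eq_bigr => i _ /=.
by rewrite INR_card_draws_over2 //; have /andP [] := a_bounds (ltn_ord i).
Qed.

Lemma INR_sum_X : INR (sum_X n m a) = INR n * (C * P).
Proof.
by rewrite sum_XE (INR_sum_const (c := C * P)) ?card_ord // => j _; exact: INR_prod_draws_over1.
Qed.

Lemma INR_sum_X2 : INR (sum_X2 n m a) = INR n * (C * P + (INR n - 1) * (C * (P * Q))).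
Proof.
rewrite sum_X2E (INR_sum_const (c := C * P + (INR n - 1) * (C * (P * Q)))) ?card_ord //.
move=> j _; rewrite (bigD1 j) //= plus_INR setUid INR_prod_draws_over1.
have n_gt0 : (0 < n)%nat by apply: leq_ltn_trans (ltn_ord j).
rewrite (INR_sum_const (c := C * (P * Q))) => [|l neq_lj]; last first.
  by apply: INR_prod_draws_over2; rewrite eq_sym.
by rewrite cardC1 card_ord INR_pred.
Qed.

Lemma mean_XE : mean_X n m a = INR n * P.
Proof. rewrite /mean_X INR_sum_X INR_n_configs; have := C_gt0 => C_gt0; field; lra. Qed.

Lemma var_XE : var_X n m a = INR n * P * var_factor (INR n) x m.
Proof.
rewrite /var_X mean_XE INR_sum_X2 INR_n_configs /var_factor -/P -/Q.
by have := C_gt0 => C_gt0; field; lra.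
Qed.

End Moments.

Section Bounds.
Local Open Scope R_scope.

Variables (n m : nat) (a : nat -> nat).
Hypothesis m_gt1 : (1 < m)%nat.
Hypothesis a_bounds : forall i, (i < m)%nat -> (0 < a i < n)%nat.
Hypothesis a_sorted : forall i j, (i <= j)%nat -> (j < m)%nat -> (a i <= a j)%nat.

Let x i := INR (a i).

Lemma n_ge2 : 2 <= INR n.
Proof.
have /andP [a0_gt0 a0_lt_n] := a_bounds (ltnW m_gt1).
by apply: (le_INR 2); apply/leP; apply: leq_ltn_trans a0_lt_n.
Qed.

Lemma x_bounds i : (i < m)%nat -> 1 <= x i <= INR n - 1.
Proof.
move=> /a_bounds /andP [a_gt0 a_lt_n].
have n_gt0 : (0 < n)%nat by apply: leq_ltn_trans a_lt_n.
rewrite /x -INR_pred //; split; [apply: (le_INR 1) | apply: le_INR]; apply/leP => //.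
by rewrite -ltnS prednK.
Qed.

Lemma x_sorted i j : (i <= j)%nat -> (j < m)%nat -> x i <= x j.
Proof. by move=> le_ij lt_jm; apply: le_INR; apply/leP; apply: a_sorted. Qed.

Lemma scaled_mean_XE :
  (INR n - INR (a 0)) * (INR n - INR (a 1)) / INR n
    * \big[Rmult/1]_(i < m) (INR (a i) / INR n)
  = (1 - INR (a 0) / INR n) * (1 - INR (a 1) / INR n) * mean_X n m a.
Proof. by rewrite (mean_XE a_bounds) /share; have := n_ge2 => N_ge2; field; lra. Qed.

Lemma var_X_ratio_bounds :
  1 <= var_X n m a / ((INR n - INR (a 0)) * (INR n - INR (a 1)) / INR n
                      * \big[Rmult/1]_(i < m) (INR (a i) / INR n))
    <= INR m ^ 2.
Proof.
have N_ge2 := n_ge2.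
have [_ share0_lt1] := share_bounds N_ge2 x_bounds (ltnW m_gt1).
have [_ share1_lt1] := share_bounds N_ge2 x_bounds m_gt1.
have P_gt0 : 0 < \big[Rmult/1]_(i < m) share (INR n) x i.
  apply: (big_ind (fun r => 0 < r)); [lra | exact: Rmult_lt_0_compat | move=> i _].
  by have [] := share_bounds N_ge2 x_bounds (ltn_ord i).
have T_gt0 : 0 < (1 - share (INR n) x 0) * (1 - share (INR n) x 1).
  by apply: Rmult_lt_0_compat; lra.
have := var_factor_ge N_ge2 x_bounds x_sorted m_gt1 (leqnn m).
have := var_factor_le N_ge2 x_bounds x_sorted m_gt1 (leqnn m).
have -> : (INR n - INR (a 0)) * (INR n - INR (a 1)) / INR n
            * \big[Rmult/1]_(i < m) (INR (a i) / INR n)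
          = INR n * \big[Rmult/1]_(i < m) share (INR n) x i
            * ((1 - share (INR n) x 0) * (1 - share (INR n) x 1)).
  by rewrite /share /x; field; lra.
rewrite (var_XE a_bounds) -/x.
set P := \big[Rmult/1]_(i < m) _ in P_gt0 *; set T := _ * _ in T_gt0 *.
set V := var_factor _ _ _ => V_le V_ge.
have -> : INR n * P * V / (INR n * P * T) = V / T by field; lra.
have : T * / T = 1 by field; lra.
have : 0 < / T by apply: Rinv_0_lt_compat.
rewrite /Rdiv; split; nra.
Qed.

End Bounds.

Theorem theorem2 (m : nat) (N : nat -> nat) (a : nat -> nat -> nat)
  (alpha : nat -> R) :
  (2 <= m)%N ->
  (* (A1) *)
  tends_to_infty N ->
  (* (A2) *)
  (forall i : nat, (i < m)%N ->
     tends_to_infty (fun k => a k i) /\ tends_to_infty (fun k => N k - a k i)) ->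
  (* (A3) *)
  (forall k i : nat, (i < m)%N -> (1 <= a k i)%N /\ (a k i <= N k - 1)%N) ->
  (forall k i j : nat, (i <= j)%N -> (j < m)%N -> (a k i <= a k j)%N) ->
  (* (A4) *)
  (forall i : nat, (i < m)%N ->
     (0 <= alpha i <= 1)%R /\
     Un_cv (fun k => (INR (a k i) / INR (N k))%R) (alpha i)) ->
  asymp (fun k => var_X (N k) m (a k))
        (fun k => ((INR (N k) - INR (a k O)) * (INR (N k) - INR (a k (S O))) / INR (N k)
                   * \big[Rmult/1%R]_(i < m) (INR (a k i) / INR (N k)))%R)
  /\
  (forall k : nat,
     ((INR (N k) - INR (a k O)) * (INR (N k) - INR (a k (S O))) / INR (N k)
        * \big[Rmult/1%R]_(i < m) (INR (a k i) / INR (N k)))%R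
     = ((1 - INR (a k O) / INR (N k)) * (1 - INR (a k (S O)) / INR (N k))
        * mean_X (N k) m (a k))%R).
Proof.
move=> m_gt1 _ _ a_range a_sorted _.
have a_bounds k i : (i < m)%N -> (0 < a k i < N k)%N.
  move=> /(a_range k) [a_gt0 a_le]; rewrite a_gt0.
  case: (N k) a_le => [|n]; last by rewrite subSS subn0.
  by rewrite sub0n leqn0 => /eqP a0; rewrite a0 in a_gt0.
split=> [|k]; last exact: scaled_mean_XE m_gt1 (a_bounds k).
exists 1%R, (INR m ^ 2)%R; split; first lra.
split; first by apply: pow_lt; apply: (lt_INR 0); apply/ltP; apply: ltnW.
by exists 0%N => k _; apply: var_X_ratio_bounds m_gt1 (a_bounds k) (a_sorted k).
Qed.
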